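(* Let $n\ge 1$ and consider units $i\in[n]=\{1,\dots,n\}$. A random binary treatment vector $\bm Z=(Z_1,\dots,Z_n)$ is drawn from a known probability distribution $\mathbb{P}_{\bm Z}$ on $\{0,1\}^n$, with support $\mathcal{Z}=\{\bm z\in\{0,1\}^n:\mathbb{P}_{\bm Z}(\bm z)>0\}$. Each unit has non-stochastic potential outcomes $Y_i(\bm z)\in\mathbb{R}$, $\bm z\in\mathcal Z$, and observed outcome $Y_i=Y_i(\bm Z)$. Let $E^0:[n]\times\mathcal Z\to\mathcal E^0$ and $E^1:[n]\times\mathcal Z\to\mathcal E^1$ be exposure mappings into finite sets (write $E_i(\bm z)=E(i,\bm z)$, with range $\mathcal E_i$), such that $E^0$ is coarser than $E^1$: there is a surjective map $c^{1\to0}:\mathcal E^1\to\mathcal E^0$ with $c^{1\to 0}(E^1_i(\bm z'))=E^0_i(\bm z)$ for all $i\in[n]$, $\bm z\in\mathcal Z$ and all $\bm z'\in\mathcal Z$ with $E^0_i(\bm z')=E^0_i(\bm z)$. For $\bm z\in\mathcal Z$ let $\tilde{\mathcal E}^1_i(\bm z)=\{e^1\in\mathcal E^1_i: c^{1\to0}(e^1)=E^0_i(\bm z)\}$. Let $\mathcal S\subseteq[n]$ be a fixed (non-random) set of focal units, and define the focal assignment set $$\mathcal C^{\mathcal S}(\bm z)=\{\bm z''\in\mathcal Z: E^1_i(\bm z'')\in\tilde{\mathcal E}^1_i(\bm z)\ \text{for all } i\in\mathcal S\}.$$ Let $T(\bm z,\bm y)$ be a fixed real-valued test statistic, and write $\bm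 Y_{\mathcal S}(\bm z)=(Y_i(\bm z))_{i\in\mathcal S}$, $\bm Y_{\mathcal S}=\bm Y_{\mathcal S}(\bm Z)$. For a set $\mathcal C\subseteq\mathcal Z$ with $\bm Z\in\mathcal C$, define the conditional randomization $p$-value $$\mathrm{p}(\bm Z,\mathcal C)=\Pr\big[T(\bm z^*,\bm Y_{\mathcal S}(\bm z^* ))\ge T(\bm Z,\bm Y_{\mathcal S})\,\big|\,\bm z^*\in\mathcal C\big],$$ the probability being over $\bm z^*\sim\mathbb P_{\bm Z\mid \bm Z\in\mathcal C}$ (i.e. $\mathbb P_{\bm Z}$ conditioned on $\mathcal C$), with $\bm Z$ held fixed. For $R\ge1$ let $\bm z^{(1)},\dots,\bm z^{(R)}$ be drawn independently from $\mathbb P_{\bm Z\mid\bm Z\in\mathcal C^{\mathcal S}}$ where $\mathcal C^{\mathcal S}=\mathcal C^{\mathcal S}(\bm Z)$, and set $\hat p_R=\frac1R\sum_{r=1}^R\bm 1\{T(\bm z^{(r)},\bm Y_{\mathcal S}(\bm z^{(r)}))\ge T(\bm Z,\bm Y_{\mathcal S})\}$. Consider the null hypothesis $\mathbb H_0$: $E^0$ is a correct exposure mapping, i.e. for all $i\in[n]$ and $\bm z,\bm z'\in\mathcal Z$, $E^0_i(\bm z)=E^0_i(\bm z')$ implies $Y_i(\bm z)=Y_i(\bm z')$. Then: (i) Under $\mathbb H_0$, for any $\alpha\in(0,1)$, $\Pr[\mathrm p(\bm Z,\mathcal C^{\mathcal S})\le\alpha\mid \bm Z\in\mathcal C^{\mathcal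 S}]\le\alpha$, where the focal assignment set $\mathcal C^{\mathcal S}$ is held fixed (at its realized value) and the probability is over $\bm Z\sim\mathbb P_{\bm Z}$ conditional on $\bm Z\in\mathcal C^{\mathcal S}$. (ii) $|\hat p_R-\mathrm p(\bm Z,\mathcal C^{\mathcal S})|=O_P(R^{-1/2})$ as $R\to\infty$, where the probability is over the independent draws $\{\bm z^{(r)}\}\sim\mathbb P_{\bm Z\mid\bm Z\in\mathcal C^{\mathcal S}}$.
   Context: Design-based setting: all randomness comes from the treatment assignment $\bm Z$ (and, in (ii), from the Monte Carlo draws). An exposure mapping $E:[n]\times\mathcal Z\to\mathcal E$ has finite codomain; $\mathcal E_i$ denotes the range of $\bm z\mapsto E(i,\bm z)$. Under $\mathbb H_0$, for every $\bm z^*\in\mathcal C^{\mathcal S}(\bm Z)$ the focal units' potential outcomes satisfy $\bm Y_{\mathcal S}(\bm z^* )=\bm Y_{\mathcal S}$, so the $p$-value is computable from observed data. $O_P(R^{-1/2})$ means bounded in probability after multiplication by $R^{1/2}$. *)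

From HB Require Import structures.
From mathcomp Require Import all_boot all_order all_algebra.
From mathcomp Require Import reals.
Set Implicit Arguments. Unset Strict Implicit. Unset Printing Implicit Defensive.
Import Order.TTheory GRing.Theory Num.Theory.
Local Open Scope ring_scope.

(* Treatment assignments z in {0,1}^n, units indexed by 'I_n = {0,..,n-1}. *)
Definition assign (n : nat) := {ffun 'I_n -> bool}.

Section Design.
Variables (R : realType) (n : nat).
Variable P : assign n -> R.

Definition zsupport : {set assign n} := [set z | 0 < P z].

Definition exp_range (ET : finType) (E : 'I_n -> assign n -> ET) (i : 'I_n)
  : {set ET} := [set e | [exists z, (z \in zsupport) && (E i z == e)]].

Variables (E0T E1T : finType) (E0 : 'I_n -> assign n -> E0T)
          (E1 : 'I_n -> assign n -> E1T) (c : E1T -> E0T).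

Definition tildeE1 (i : 'I_n) (z : assign n) : {set E1T} :=
  [set e in exp_range E1 i | c e == E0 i z].

Definition focal_set (S : {set 'I_n}) (z : assign n) : {set assign n} :=
  [set z2 in zsupport | [forall i in S, E1 i z2 \in tildeE1 i z]].

End Design.

Section PValue.
Variables (R : realType) (n : nat) (P : assign n -> R).
Variables (Y : 'I_n -> assign n -> R) (S : {set 'I_n}).
(* test statistic T(z, y); y is the focal outcome vector Y_S, encoded as a
   vector over 'I_n whose non-focal coordinates are set to 0 *)
Variable T : assign n -> {ffun 'I_n -> R} -> R.

Definition YS (z : assign n) : {ffun 'I_n -> R} :=
  [ffun i => if i \in S then Y i z else 0].

Definition condP (C : {set assign n}) (z : assign n) : R :=
  if z \in C then P z / (\sum_(z' in C) P z') else 0.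

Definition exceeds (z zs : assign n) : R :=
  ((T z (YS z) <= T zs (YS zs))%R)%:R.

Definition pval (z : assign n) (C : {set assign n}) : R :=
  \sum_(zs in C) condP C zs * exceeds z zs.

Definition phat (m : nat) (z : assign n) (w : {ffun 'I_m -> assign n}) : R :=
  (\sum_(r < m) exceeds z (w r)) / m%:R.

(* probability, under m i.i.d. draws from P_{Z|Z in C}, of an event on draws *)
Definition iid_prob (m : nat) (C : {set assign n})
  (A : {ffun 'I_m -> assign n} -> bool) : R :=
  \sum_(w : {ffun 'I_m -> assign n}) (\prod_(r < m) condP C (w r)) * (A w)%:R.

End PValue.

(* Under the null hypothesis every focal assignment gives each focal unit the
   same coarse exposure as the realized assignment, hence the same outcome, so
   on C^S the test statistic is a fixed function t(z) and the p-value is the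
   tail G(z) = Pr[t(z') >= t(z)] of a finite distribution.  Validity is the
   classical fact Pr[G(Z) <= alpha] <= alpha: among the z with G(z) <= alpha,
   one of smallest statistic has G(z) >= Pr[G(Z) <= alpha].  The Monte Carlo
   estimate is a mean of R i.i.d. [0,1]-valued indicators with mean p, so
   Chebyshev's inequality with variance at most 1/R gives the R^{-1/2} rate. *)

From HB Require Import structures.
From mathcomp Require Import all_boot all_order all_algebra.
From mathcomp Require Import reals.
From mathcomp Require Import ring lra.
Set Implicit Arguments.
Unset Strict Implicit.
Unset Printing Implicit Defensive.
Import Order.TTheory GRing.Theory Num.Theory.
Local Open Scope ring_scope.

Lemma randomization_pvalue_valid (R : realDomainType) (d : Order.disp_t)
    (T : orderType d) (I : finType) (D : {set I}) (q : I -> R) (t : I -> T)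
    (alpha : R) :
  (forall z, 0 <= q z) -> 0 <= alpha ->
  \sum_(z in D) q z *
    ((\sum_(zs in D) q zs * ((t z <= t zs)%O)%:R <= alpha)%R)%:R <= alpha.
Proof.
move=> q_ge0 alpha_ge0.
pose G z := \sum_(zs in D) q zs * ((t z <= t zs)%O)%:R.
case: (pickP [pred z in D | G z <= alpha]) => [z1 Az1 | noA]; last first.
  by rewrite big1 // => z zD; have := noA z; rewrite /= zD /= => ->; rewrite mulr0.
(* A rejected assignment of smallest statistic has the largest tail. *)
case: (arg_minP t Az1) => zmin /andP[zminD Gzmin] zmin_min.
apply: le_trans Gzmin; apply: ler_sum => z zD.
rewrite ler_wpM2l //; case Gz: (G z <= alpha); last by rewrite ler0n.
by rewrite zmin_min //= zD.
Qed.

Section IidSample.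
Variables (R : comPzRingType) (I : finType) (q : I -> R).
Hypothesis q_sum1 : \sum_z q z = 1.

Lemma iid_expect_pair m (r s : 'I_m) (f : I -> R) :
  \sum_(w : {ffun 'I_m -> I}) (\prod_(k < m) q (w k)) * (f (w r) * f (w s))
  = if r == s then \sum_z q z * f z ^+ 2 else (\sum_z q z * f z) ^+ 2.
Proof.
pose g (k : 'I_m) z := (if k == r then f z else 1) * (if k == s then f z else 1).
have -> : \sum_(w : {ffun 'I_m -> I}) (\prod_(k < m) q (w k)) * (f (w r) * f (w s))
    = \prod_(k < m) \sum_z q z * g k z.
  rewrite bigA_distr_bigA; apply: eq_bigr => w _.
  by rewrite !big_split /= -!big_mkcond /= !big_pred1_eq.
have sum_g_other k : k != r -> k != s -> \sum_z q z * g k z = 1.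
  move=> /negbTE kr /negbTE ks; rewrite -q_sum1; apply: eq_bigr => z _.
  by rewrite /g kr ks !mulr1.
have [rs | rs] := eqVneq r s; first subst s.
  rewrite (bigD1 r) //= [X in _ * X]big1 ?mulr1 //.
    by apply: eq_bigr => z _; rewrite /g eqxx expr2.
  by move=> k kr; apply: sum_g_other.
rewrite (bigD1 r) //= (bigD1 s) 1?eq_sym //= [X in _ * (_ * X)]big1 ?mulr1; last first.
  by move=> k /andP[]; apply: sum_g_other.
rewrite expr2; congr (_ * _); apply: eq_bigr => z _.
  by rewrite /g eqxx (negbTE rs) mulr1.
by rewrite /g eqxx eq_sym (negbTE rs) mul1r.
Qed.

Lemma iid_expect_sum_sqr m (f : I -> R) : \sum_z q z * f z = 0 ->
  \sum_(w : {ffun 'I_m -> I}) (\prod_(k < m) q (w k)) * (\sum_(r < m) f (w r)) ^+ 2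
  = m%:R * \sum_z q z * f z ^+ 2.
Proof.
move=> f_mean0.
under eq_bigr => w _ do rewrite expr2 mulr_suml big_distrr /=.
under eq_bigr => w _ do under eq_bigr => r _ do rewrite mulr_sumr big_distrr /=.
rewrite exchange_big; under eq_bigr => r _ do rewrite exchange_big /=.
under eq_bigr => r _ do under eq_bigr => s _ do rewrite iid_expect_pair f_mean0 expr0n /=.
rewrite mulr_natl -[in RHS](card_ord m) -sumr_const; apply: eq_bigr => r _.
rewrite (bigD1 r) //= eqxx [X in _ + X]big1 ?addr0 // => s /negbTE.
by rewrite eq_sym => ->.
Qed.

End IidSample.

Lemma markov_sqr (R : realFieldType) (J : finType) (mu X : J -> R) (a : R) :
  (forall w, 0 <= mu w) -> 0 < a ->
  \sum_w mu w * ((a < `|X w|)%R)%:R <= (\sum_w mu w * X w ^+ 2) / a ^+ 2.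
Proof.
move=> mu_ge0 a_gt0; rewrite mulr_suml; apply: ler_sum => w _.
rewrite -mulrA ler_wpM2l //.
case: ltP => [aX | _]; last by rewrite divr_ge0 ?sqr_ge0.
rewrite ler_pdivlMr ?exprn_gt0 // mul1r -[X w ^+ 2]real_normK ?num_real //.
by rewrite ler_pXn2r ?nnegrE ?normr_ge0 ?(ltW a_gt0) ?(ltW aX).
Qed.

Lemma sample_mean_deviation_le (R : rcfType) (I : finType) (q X : I -> R)
    (M : R) (m : nat) :
  (forall z, 0 <= q z) -> \sum_z q z = 1 -> (forall z, 0 <= X z <= 1) ->
  0 < M -> (0 < m)%N ->
  \sum_(w : {ffun 'I_m -> I}) (\prod_(r < m) q (w r)) *
    ((M / Num.sqrt m%:R < `|(\sum_(r < m) X (w r)) / m%:R - \sum_z q z * X z|)%R)%:R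
  <= M ^- 2.
Proof.
move=> q_ge0 q_sum1 X01 M_gt0 m_gt0.
set p := \sum_z q z * X z; pose f z := X z - p.
have p01 : 0 <= p <= 1.
  rewrite sumr_ge0 => [|z _]; last by rewrite mulr_ge0 //; case/andP: (X01 z).
  rewrite -q_sum1 ler_sum // => z _; rewrite ler_piMr //; by case/andP: (X01 z).
have f_mean0 : \sum_z q z * f z = 0.
  under eq_bigr => z _ do rewrite mulrBr.
  by rewrite sumrB -mulr_suml q_sum1 mul1r subrr.
have f_sqr_le1 z : f z ^+ 2 <= 1.
  by case/andP: (X01 z) => X0 X1; case/andP: p01 => p0 p1; rewrite /f; nra.
set a := Num.sqrt m%:R.
have a_gt0 : 0 < a by rewrite sqrtr_gt0 ltr0n.
have a_sqr : a ^+ 2 = m%:R by rewrite sqr_sqrtr ?ler0n.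
have deviationE (w : {ffun 'I_m -> I}) :
    (M / a < `|(\sum_(r < m) X (w r)) / m%:R - p|)
    = (M * a < `|\sum_(r < m) f (w r)|).
  have -> : (\sum_(r < m) X (w r)) / m%:R - p = (\sum_(r < m) f (w r)) / a ^+ 2.
    rewrite a_sqr /f sumrB sumr_const card_ord; field.
    by rewrite pnatr_eq0 -lt0n.
  rewrite normrM normfV [`|a ^+ 2|]ger0_norm ?exprn_ge0 ?(ltW a_gt0) //.
  rewrite ltr_pdivlMr ?exprn_gt0 //.
  by rewrite expr2 mulrA divfK ?gt_eqF.
under eq_bigr => w _ do rewrite deviationE.
have sample_ge0 (w : {ffun 'I_m -> I}) : 0 <= \prod_(r < m) q (w r).
  exact: prodr_ge0.
apply: le_trans (markov_sqr (fun w : {ffun 'I_m -> I} => \sum_(r < m) f (w r))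
  sample_ge0 (mulr_gt0 M_gt0 a_gt0)) _.
rewrite iid_expect_sum_sqr // exprMn a_sqr.
have -> : m%:R * (\sum_z q z * f z ^+ 2) / (M ^+ 2 * m%:R)
    = (\sum_z q z * f z ^+ 2) / M ^+ 2.
  by field; rewrite gt_eqF //= pnatr_eq0 -lt0n.
rewrite -[leRHS]mul1r ler_wpM2r ?invr_ge0 ?exprn_ge0 ?(ltW M_gt0) //.
by rewrite -q_sum1 ler_sum // => z _; rewrite ler_piMr.
Qed.

Section FocalAssignments.
Variables (R : realType) (n : nat) (P : assign n -> R).
Variables (E0T E1T : finType) (E0 : 'I_n -> assign n -> E0T)
  (E1 : 'I_n -> assign n -> E1T) (c : E1T -> E0T).
Hypothesis E0_coarser : forall i z z', z \in zsupport P -> z' \in zsupport P ->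
  E0 i z' = E0 i z -> c (E1 i z') = E0 i z.

Lemma focal_set_refl S z : z \in zsupport P -> z \in focal_set P E0 E1 c S z.
Proof.
move=> zP; rewrite inE zP; apply/forallP => i; apply/implyP => _.
rewrite inE (E0_coarser zP zP) // eqxx andbT inE.
by apply/existsP; exists z; rewrite zP eqxx.
Qed.

Lemma focal_set_E0 S z z' i :
  z' \in focal_set P E0 E1 c S z -> i \in S -> E0 i z' = E0 i z.
Proof.
rewrite inE => /andP[z'P /forallP focal] iS.
move: (focal i); rewrite iS inE => /andP[_ /eqP <-].
by rewrite (E0_coarser z'P z'P).
Qed.

Variable Y : 'I_n -> assign n -> R.
Hypothesis Y_E0 : forall i z z', z \in zsupport P -> z' \in zsupport P ->
  E0 i z = E0 i z' -> Y i z = Y i z'.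

Lemma focal_outcomes_eq S z z' : z \in zsupport P ->
  z' \in focal_set P E0 E1 c S z -> YS Y S z' = YS Y S z.
Proof.
move=> zP z'C; apply/ffunP => i; rewrite !ffunE; case: ifP => // iS.
apply: Y_E0 => //; last exact: focal_set_E0 z'C iS.
by move: z'C; rewrite inE => /andP[].
Qed.

End FocalAssignments.

Section Conditioning.
Variables (R : realType) (n : nat) (P : assign n -> R).
Hypothesis P_ge0 : forall z, 0 <= P z.

Lemma condP_ge0 (C : {set assign n}) z : 0 <= condP P C z.
Proof.
rewrite /condP; case: ifP => // _.
by rewrite divr_ge0 // sumr_ge0.
Qed.

Lemma condP_sum1 (C : {set assign n}) z0 :
  z0 \in C -> z0 \in zsupport P -> \sum_z condP P C z = 1.
Proof.
move=> z0C; rewrite inE => Pz0_gt0.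
rewrite /condP -big_mkcond /= -mulr_suml divff // gt_eqF //.
by rewrite (bigD1 z0) //= ltr_wpDr // sumr_ge0.
Qed.

Lemma pvalE Y S T z (C : {set assign n}) :
  pval P Y S T z C = \sum_zs condP P C zs * exceeds Y S T z zs.
Proof.
rewrite /pval big_mkcond; apply: eq_bigr => zs _.
by rewrite /condP; case: (zs \in C); rewrite ?mul0r.
Qed.

End Conditioning.

Theorem theorem1 (R : realType) (n : nat) (P : assign n -> R)
  (E0T E1T : finType) (E0 : 'I_n -> assign n -> E0T)
  (E1 : 'I_n -> assign n -> E1T) (c : E1T -> E0T)
  (S : {set 'I_n}) (Y : 'I_n -> assign n -> R)
  (T : assign n -> {ffun 'I_n -> R} -> R) :
  (1 <= n)%N ->
  (* P_Z is a probability distribution on {0,1}^n *)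
  (forall z, 0 <= P z) -> \sum_z P z = 1 ->
  (* E^0 coarser than E^1 via a surjective c *)
  (forall e0 : E0T, exists e1 : E1T, c e1 = e0) ->
  (forall i z z', z \in zsupport P -> z' \in zsupport P ->
     E0 i z' = E0 i z -> c (E1 i z') = E0 i z) ->
  (* null hypothesis H0: E^0 is a correct exposure mapping *)
  (forall i z z', z \in zsupport P -> z' \in zsupport P ->
     E0 i z = E0 i z' -> Y i z = Y i z') ->
  forall Z0 : assign n, Z0 \in zsupport P ->
  let CS := focal_set P E0 E1 c S Z0 in
  (* (i) validity, conditional on Z in C^S (held fixed) *)
  (forall alpha : R, 0 < alpha < 1 ->
     \sum_(z in CS) condP P CS z * ((pval P Y S T z CS <= alpha)%R)%:R <= alpha)
  /\
  (* (ii) |p_hat_m - p(Z0, C^S)| = O_P(m^{-1/2}) as m -> oo *)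
  (forall eps : R, 0 < eps -> exists M : R, 0 < M /\ exists m0 : nat,
     forall m : nat, (m0 <= m)%N -> (0 < m)%N ->
       iid_prob (m:=m) P CS
         (fun w => M / Num.sqrt (m%:R) < `|phat Y S T Z0 w - pval P Y S T Z0 CS|)
       < eps).
Proof.
move=> _ P_ge0 _ _ E0_coarser Y_E0 Z0 Z0P CS.
have Z0CS : Z0 \in CS := focal_set_refl E0_coarser S Z0P.
have YS_CS z : z \in CS -> YS Y S z = YS Y S Z0 :=
  focal_outcomes_eq E0_coarser Y_E0 Z0P.
split=> [alpha /andP[alpha_gt0 _] | eps eps_gt0].
  pose t z := T z (YS Y S Z0).
  rewrite (eq_bigr (fun z => condP P CS z *
    ((\sum_(zs in CS) condP P CS zs * ((t z <= t zs)%R)%:R <= alpha)%R)%:R)).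
    exact: randomization_pvalue_valid (condP_ge0 P_ge0 CS) (ltW alpha_gt0).
  move=> z zCS; rewrite /pval; congr (_ * ((_ <= alpha)%R)%:R).
  by apply: eq_bigr => zs zsCS; rewrite /exceeds !YS_CS.
pose M := 1 + eps^-1.
have M_gt0 : 0 < M by rewrite addr_gt0 ?invr_gt0.
exists M; split => //; exists 0%N => m _ m_gt0.
have exceeds01 z : 0 <= exceeds Y S T Z0 z <= 1.
  by rewrite /exceeds; case: (T _ _ <= T _ _)%R; rewrite /= ?lexx ?ler01.
rewrite /iid_prob /phat pvalE.
apply: le_lt_trans (sample_mean_deviation_le (condP_ge0 P_ge0 CS)
  (condP_sum1 P_ge0 Z0CS Z0P) exceeds01 M_gt0 m_gt0) _.
rewrite -[eps]invrK ltf_pV2 ?posrE ?exprn_gt0 ?invr_gt0 //.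
apply: (@lt_le_trans _ _ M); first by rewrite ltrDr.
by rewrite expr2 ler_peMr ?(ltW M_gt0) // lerDl invr_ge0 ltW.
Qed.
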